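(* Let $f:\{0,1\}^n\to\{0,1\}$ be a Boolean function and $0<\epsilon<1$. Then $\operatorname{rdeg}_\epsilon(f)\le2\max\{\mathsf N_\epsilon(f),\mathsf N_\epsilon(\overline f)\}$.
   Context: $\mathsf N_\epsilon(f)$ is the minimum degree of a real polynomial $p$ with $|p(x)|\le\epsilon$ whenever $f(x)=0$ and $|p(x)|\ge1$ whenever $f(x)=1$; $\overline f=1-f$. The approximate rational degree $\operatorname{rdeg}_\epsilon(f)$ is the minimum of $\max\{\deg p,\deg q\}$ over real polynomials $p,q$ such that $q(x)\neq 0$ and $|f(x)-p(x)/q(x)|\le\epsilon$ for all $x\in\{0,1\}^n$. *)

From mathcomp Require Import all_boot all_algebra.
From mathcomp Require Import Rstruct.
From mathcomp Require Import mpoly.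
From Stdlib Require Import Reals.
Set Implicit Arguments.
Unset Strict Implicit.
Import GRing.Theory Num.Theory.
Local Open Scope ring_scope.

Definition embed (n : nat) (x : 'I_n -> bool) : 'I_n -> R :=
  fun i => (x i)%:R.

Definition peval (n : nat) (p : {mpoly R[n]}) (x : 'I_n -> bool) : R :=
  p.@[embed x].

(* deg p <= d  (msize p = total degree + 1, and msize 0 = 0) *)
Definition deg_le (n : nat) (p : {mpoly R[n]}) (d : nat) : Prop :=
  leq (msize p) d.+1.

Definition one_sided_rep (n : nat) (f : ('I_n -> bool) -> bool) (eps : R)
    (d : nat) : Prop :=
  exists p : {mpoly R[n]}, deg_le p d /\
    forall x : 'I_n -> bool,
      (f x = false -> `|peval p x| <= eps) /\
      (f x = true -> 1 <= `|peval p x|).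

Definition N_eps_is (n : nat) (f : ('I_n -> bool) -> bool) (eps : R)
    (d : nat) : Prop :=
  one_sided_rep f eps d /\ forall d', one_sided_rep f eps d' -> leq d d'.

Definition rat_approx (n : nat) (f : ('I_n -> bool) -> bool) (eps : R)
    (d : nat) : Prop :=
  exists p q : {mpoly R[n]}, deg_le p d /\ deg_le q d /\
    forall x : 'I_n -> bool,
      peval q x != 0 /\
      `|(f x)%:R - peval p x / peval q x| <= eps.

Definition rdeg_is (n : nat) (f : ('I_n -> bool) -> bool) (eps : R)
    (d : nat) : Prop :=
  rat_approx f eps d /\ forall d', rat_approx f eps d' -> leq d d'.

Definition fneg (n : nat) (f : ('I_n -> bool) -> bool) : ('I_n -> bool) -> bool :=
  fun x => ~~ f x.

From mathcomp Require Import all_boot all_order all_algebra.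
From mathcomp Require Import Rstruct.
From mathcomp Require Import mpoly.
From Stdlib Require Import Reals.
Set Implicit Arguments.
Unset Strict Implicit.
Unset Printing Implicit Defensive.

Import Order.Theory GRing.Theory Num.Theory.
Local Open Scope ring_scope.

(* Take one-sided eps-representations p of f and q of its negation, both of
   degree at most d. Where f = 1 we have |p| >= 1 >= eps >= |q|, so
   p^2 / (p^2 + q^2) is within q^2 / (p^2 + q^2) <= eps^2 <= eps of 1; where
   f = 0 the roles of p and q swap and the quotient is within eps of 0.
   Numerator and denominator have degree at most 2d. *)

Section SquareShare.
Variable R : realFieldType.
Implicit Types (u v e : R).

Lemma sqr_sum_gt0 u v : 1 <= `|u| -> 0 < u ^+ 2 + v ^+ 2.
Proof.
move=> u_ge1; rewrite ltr_wpDr ?sqr_ge0 // -(real_normK (num_real u)).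
by rewrite exprn_gt0 // (lt_le_trans ltr01).
Qed.

Lemma sqr_share_le u v e : 0 <= e <= 1 -> 1 <= `|u| -> `|v| <= e ->
  v ^+ 2 / (u ^+ 2 + v ^+ 2) <= e.
Proof.
move=> /andP[e_ge0 e_le1] u_ge1 v_le; have sum_gt0 := sqr_sum_gt0 v u_ge1.
rewrite ler_pdivrMr // -(real_normK (num_real u)) -(real_normK (num_real v)).
have u2_ge1 : 1 <= `|u| ^+ 2 by rewrite exprn_ege1.
apply: (le_trans (y := e ^+ 2)); first by rewrite lerXn2r ?nnegrE.
rewrite expr2 ler_wpM2l //; apply: (le_trans e_le1).
by rewrite (le_trans u2_ge1) // lerDl sqr_ge0.
Qed.

Lemma sqr_share_near1 u v e : 0 <= e <= 1 -> 1 <= `|u| -> `|v| <= e ->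
  `|1 - u ^+ 2 / (u ^+ 2 + v ^+ 2)| <= e.
Proof.
move=> e01 u_ge1 v_le; have sum_gt0 := sqr_sum_gt0 v u_ge1.
have -> : 1 - u ^+ 2 / (u ^+ 2 + v ^+ 2) = v ^+ 2 / (u ^+ 2 + v ^+ 2).
  by rewrite -{1}(divff (lt0r_neq0 sum_gt0)) -mulrBl addrC addKr.
by rewrite ger0_norm ?divr_ge0 ?sqr_ge0 ?(ltW sum_gt0) // sqr_share_le.
Qed.

Lemma sqr_share_near0 u v e : 0 <= e <= 1 -> `|u| <= e -> 1 <= `|v| ->
  `|0 - u ^+ 2 / (u ^+ 2 + v ^+ 2)| <= e.
Proof.
move=> e01 u_le v_ge1; have sum_gt0 := sqr_sum_gt0 u v_ge1.
rewrite sub0r normrN addrC ger0_norm ?divr_ge0 ?sqr_ge0 ?(ltW sum_gt0) //.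
exact: sqr_share_le.
Qed.

End SquareShare.

Section DegreeBounds.
Variable n : nat.
Implicit Types p q : {mpoly R[n]}.

Lemma deg_le_leq p (d d' : nat) : (d <= d')%nat -> deg_le p d -> deg_le p d'.
Proof. by rewrite /deg_le => le_dd' /leq_trans; apply. Qed.

Lemma deg_le_add p q d : deg_le p d -> deg_le q d -> deg_le (p + q) d.
Proof.
by move=> dp dq; apply: leq_trans (msizeD_le p q) _; rewrite geq_max dp dq.
Qed.

Lemma deg_le_mul p q (d e : nat) :
  deg_le p d -> deg_le q e -> deg_le (p * q) (d + e).
Proof.
rewrite /deg_le; have [->|p_neq0] := eqVneq p 0; first by rewrite mul0r msize0.
have [->|q_neq0] := eqVneq q 0; first by rewrite mulr0 msize0.
rewrite msizeM // -subn1 leq_subLR add1n => dp de.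
by apply: leq_trans (leq_add dp de) _; rewrite addSn addnS.
Qed.

Lemma deg_le_sqr p d : deg_le p d -> deg_le (p ^+ 2) (2 * d).
Proof. by move=> dp; rewrite expr2 mul2n -addnn; apply: deg_le_mul. Qed.

End DegreeBounds.

Lemma pevalD n (p q : {mpoly R[n]}) x : peval (p + q) x = peval p x + peval q x.
Proof. exact: mevalD. Qed.

Lemma pevalXn n (p : {mpoly R[n]}) k x : peval (p ^+ k) x = peval p x ^+ k.
Proof. exact: rmorphXn. Qed.

Lemma one_sided_rep_leq n (f : ('I_n -> bool) -> bool) eps (d d' : nat) :
  (d <= d')%nat -> one_sided_rep f eps d -> one_sided_rep f eps d'.
Proof.
by move=> le_dd' [p [dp rep_p]]; exists p; split; first exact: deg_le_leq dp.
Qed.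

Lemma one_sided_reps_rat_approx n (f : ('I_n -> bool) -> bool) eps d :
  0 <= eps <= 1 -> one_sided_rep f eps d -> one_sided_rep (fneg f) eps d ->
  rat_approx f eps (2 * d).
Proof.
move=> eps01 [p [dp rep_p]] [q [dq rep_q]].
have dp2 := deg_le_sqr dp; have dq2 := deg_le_sqr dq.
exists (p ^+ 2), (p ^+ 2 + q ^+ 2); do 2!split=> //; first exact: deg_le_add.
move=> x; rewrite pevalD !pevalXn; have := rep_q x; rewrite /fneg.
case: (f x) (rep_p x) => -[p_le p_ge1] -[q_le q_ge1].
- by rewrite lt0r_neq0 ?sqr_sum_gt0 ?p_ge1 // sqr_share_near1 ?p_ge1 ?q_le.
- rewrite addrC lt0r_neq0 ?sqr_sum_gt0 ?q_ge1 // addrC.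
  by rewrite sqr_share_near0 ?p_le ?q_ge1.
Qed.

Theorem lemma3p5 (n : nat) (f : ('I_n -> bool) -> bool) (eps : R)
    (Heps0 : 0 < eps) (Heps1 : eps < 1) (a b r : nat) :
  N_eps_is f eps a -> N_eps_is (fneg f) eps b -> rdeg_is f eps r ->
  leq r (muln 2 (maxn a b)).
Proof.
case=> [rep_f _] [rep_nf _] [_ rdeg_min]; apply: rdeg_min.
apply: one_sided_reps_rat_approx; first by rewrite !ltW.
- exact: one_sided_rep_leq (leq_maxl a b) rep_f.
- exact: one_sided_rep_leq (leq_maxr a b) rep_nf.
Qed.
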